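(* Let $q$ be a prime power, let $G=\{g_1,\dots,g_n\}$ be a finite group of order $n$ (with this fixed ordering), let $v\in\mathbb{F}_qG$, and let $C(v)\subseteq\mathbb{F}_q^n$ be the row space of $\sigma_G(v)$. Suppose $|\mathrm{PAut}(C(v))|=n$ and $\pi\in\mathrm{PAut}(C(v))$ is of type $p$-$(c,f)$ with $p\neq1$. Then $f=0$; that is, $\pi$ has no fixed points (so $p$ is the order of $\pi$ and $n=pc$).
   Context: $\mathbb{F}_qG$ is the group ring; an element $v=\sum_i\alpha_{g_i}g_i$ is identified with the vector $(\alpha_{g_1},\dots,\alpha_{g_n})\in\mathbb{F}_q^n$. The group ring matrix $\sigma_G(v)$ is the $n\times n$ matrix whose $(i,j)$ entry is $\alpha_{g_i^{-1}g_j}$. For a code $\mathcal{C}\subseteq\mathbb{F}_q^n$, $\mathrm{PAut}(\mathcal{C})=\{\pi\in S_n:\pi(\mathcal{C})=\mathcal{C}\}$, where $S_n$ acts by permuting coordinates. A permutation $\pi\in S_n$ is of type $p$-$(c,f)$ if its disjoint cycle decomposition consists of exactly $c$ cycles of length $p$ and $f$ fixed points (and no other cycles). *)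

From HB Require Import structures.
From mathcomp Require Import all_boot all_order all_algebra all_fingroup all_field.
Set Implicit Arguments. Unset Strict Implicit. Unset Printing Implicit Defensive.
Import GRing.Theory.
Local Open Scope ring_scope.

(* Group ring matrix sigma_G(v) w.r.t. the ordering g : 'I_n -> gT of the group:
   (i,j) entry is v (g_i^-1 g_j).  An element v of F_q G is its coefficient
   function gT -> F. *)
Definition group_ring_mx (F : fieldType) (gT : finGroupType) (n : nat)
  (g : 'I_n -> gT) (v : gT -> F) : 'M[F]_n :=
  \matrix_(i < n, j < n) v ((g i)^-1 * g j)%g.

(* Permutation automorphism group of the code C = row space of M:
   permutations s of the n coordinates with s(C) = C. *)
Definition PAut (F : fieldType) (m n : nat) (M : 'M[F]_(m, n)) : {set 'S_n} :=
  [set s : 'S_n | (col_perm s M == M)%MS].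

Definition is_cycle_type (n : nat) (s : 'S_n) (p c f : nat) : Prop :=
  [/\ forall O, O \in porbits s -> (#|O| == p) || (#|O| == 1%N),
      #|[set O in porbits s | #|O| == p]| = c &
      #|[set O in porbits s | #|O| == 1%N]| = f].

From HB Require Import structures.
From mathcomp Require Import all_boot all_order all_algebra all_fingroup all_field.
Set Implicit Arguments. Unset Strict Implicit. Unset Printing Implicit Defensive.

(* For every h in G, permuting the columns of sigma_G(v) by g_j |-> h g_j
   amounts to permuting its rows, so this permutation lies in PAut(C(v)).
   These n left translations are pairwise distinct, so when |PAut(C(v))| = n
   they are all of PAut(C(v)).  A left translation by h <> 1 fixes no
   coordinate, while the translation by 1 is the identity, which has no cycle
   of length p <> 1. *)

Lemma card_porbit1 (T : finType) (s : {perm T}) (x : T) :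
  (#|porbit s x| == 1%N) = (s x == x).
Proof.
apply/idP/eqP => [/cards1P[y Oy] | sx].
  have := mem_porbit s 1 x; have := porbit_id s x.
  by rewrite Oy expg1 !inE => /eqP -> /eqP.
apply/cards1P; exists x; apply/setP => y; rewrite inE.
apply/idP/eqP => [/porbitP[i ->] | ->]; last exact: porbit_id.
by elim: i => [|i IHi]; rewrite ?perm1 // expgSr permM IHi.
Qed.

Section CycleType.
Variables (n p c f : nat) (s : 'S_n).
Hypothesis s_type : is_cycle_type s p c f.

Lemma cycle_type_fixed_free : (forall x, s x != x) -> f = 0%N.
Proof.
case: s_type => _ _ <- s_nfix; apply/eqP; rewrite cards_eq0; apply/eqP/setP => O.
rewrite !inE; apply/negbTE/andP => -[/imsetP[x _ ->]].
by rewrite card_porbit1 (negPf (s_nfix x)).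
Qed.

Lemma cycle_type_neq1 : p != 1%N -> (0 < c)%N -> s != 1%g.
Proof.
case: s_type => _ <- _ p_neq1; rewrite card_gt0 => /set0Pn[O].
rewrite !inE => /andP[/imsetP[x _ ->] /eqP O_p].
by apply: contraNneq p_neq1 => s1; rewrite -O_p card_porbit1 s1 perm1.
Qed.

End CycleType.

Section LeftRegular.
Variables (gT : finGroupType) (n : nat) (g : 'I_n -> gT) (gi : gT -> 'I_n).
Hypotheses (gK : cancel g gi) (giK : cancel gi g).

Definition lreg_fun (h : gT) (j : 'I_n) : 'I_n := gi (h * g j)%g.

Lemma lreg_fun_inj h : injective (lreg_fun h).
Proof. by move=> a b /(canRL giK); rewrite giK => /mulgI /(can_inj gK). Qed.

Definition lreg_perm (h : gT) : 'S_n := perm (@lreg_fun_inj h).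

Lemma lreg_permE h j : g (lreg_perm h j) = (h * g j)%g.
Proof. by rewrite permE giK. Qed.

Lemma lreg_perm1 : lreg_perm 1 = 1%g.
Proof. by apply/permP => j; apply: (can_inj gK); rewrite lreg_permE mul1g perm1. Qed.

Lemma lreg_perm_fixed_free h : h != 1%g -> forall j, lreg_perm h j != j.
Proof.
move=> h_neq1 j; apply: contraNneq h_neq1 => /(congr1 g).
by rewrite lreg_permE -{2}(mul1g (g j)) => /mulIg ->.
Qed.

Lemma lreg_perm_inj : injective lreg_perm.
Proof.
move=> a b /(congr1 (fun t : 'S_n => g (t (gi 1%g)))).
by rewrite /= !lreg_permE giK => /mulIg.
Qed.

Lemma lreg_perm_PAut (F : fieldType) (v : gT -> F) h :
  lreg_perm h \in PAut (group_ring_mx g v).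
Proof.
rewrite inE; apply/eqmxMunitP; exists (perm_mx (lreg_perm h^-1)).
  exact: unitmx_perm.
rewrite -row_permE; apply/matrixP => i j; rewrite !mxE !lreg_permE.
by rewrite invMg invgK mulgA.
Qed.

Lemma PAut_lreg (F : fieldType) (v : gT -> F) :
  n = #|gT| -> (#|PAut (group_ring_mx g v)| <= n)%N ->
  PAut (group_ring_mx g v) = lreg_perm @: [set: gT].
Proof.
move=> card_n le_PAut; apply/esym/eqP; rewrite eqEcard.
rewrite card_imset ?cardsT -?card_n //; last exact: lreg_perm_inj.
rewrite le_PAut andbT; apply/subsetP => _ /imsetP[h _ ->].
exact: lreg_perm_PAut.
Qed.

End LeftRegular.

Theorem theorem4p2 (F : finFieldType) (gT : finGroupType) (n : nat)
  (g : 'I_n -> gT) (v : gT -> F) (s : 'S_n) (p c f : nat) :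
  n = #|gT| -> bijective g ->
  #|PAut (group_ring_mx g v)| = n ->
  s \in PAut (group_ring_mx g v) ->
  is_cycle_type s p c f -> p != 1%N -> (0 < c)%N ->
  f = 0%N.
Proof.
move=> card_n [gi gK giK] card_PAut s_PAut s_type p_neq1 c_gt0.
have s_neq1 := cycle_type_neq1 s_type p_neq1 c_gt0.
move: s_PAut; rewrite (PAut_lreg gK giK card_n) ?card_PAut //.
case/imsetP=> h _ s_def; apply: (cycle_type_fixed_free s_type).
rewrite s_def; apply: lreg_perm_fixed_free; apply: contraNneq s_neq1 => h1.
by rewrite s_def h1 lreg_perm1.
Qed.
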